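(* Let $G=(V,E)$ be a finite graph, $p_e\in(0,1)$ and $x_e>0$ for each $e\in E$. Let $\Omega=\{0,1\}^E$, $\Sigma\subset\Omega$, $f:\Omega\to2^\Sigma$, $f(\omega)=\Sigma^\downarrow(\omega):=\{\eta\in\Sigma\mid\eta\subset\omega\}$, and $$\rho[\omega]=\mathbb{P}_p[\omega]\ (\omega\in\Omega),\qquad \gamma[\eta]=\mathbb{P}_{\frac{x}{p+x}}[\eta\mid\Sigma]\propto\prod_{e\in\eta}\frac{x_e}{p_e}\ (\eta\in\Sigma).$$ Let $\mathscr{P}$ be the probability measure on $\Omega\times\Sigma$ with $\mathscr{P}[\omega,\eta]\propto\rho[\omega]\gamma[\eta]\mathbf{1}[\eta\in f(\omega)]$. Then: (a) The marginal $\mathscr{P}_\Sigma$ of $\mathscr{P}$ on $\Sigma$ satisfies $\mathscr{P}_\Sigma[\eta]\propto\prod_{e\in\eta}x_e$. For each $\omega$ with $\mathscr{P}_\Omega[\omega]\neq0$, $\mathscr{P}[\cdot\mid\omega]=\mathbb{P}_{\frac{x}{p+x}}[\cdot\mid\Sigma^\downarrow(\omega)]$. (b) The marginal of $\mathscr{P}$ on $\Omega$ is $\mathscr{P}_\Omega=\mathscr{P}_\Sigma\cup\mathbb{P}_p$. For each $\eta\in\Sigma$ with $\mathscr{P}_\Sigma[\eta]\neq0$, $\mathscr{P}[\cdot\mid\eta]=\mathbb{P}_p\cup\delta_\eta$, i.e. Bernoulli percolation on $E$ with parameters $(p_e)$ conditioned on all edges of $\eta$ being open.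
   Context: Elements of $\{0,1\}^E$ are identified with subsets of $E$ (open edges). For $r=(r_e)\in[0,1]^E$, $\mathbb{P}_r$ is Bernoulli percolation: each edge $e$ open independently with probability $r_e$; $\frac{x}{p+x}$ denotes the vector $(x_e/(p_e+x_e))_e$. $\delta_\eta$ is the Dirac mass at $\eta$. For measures $\pi,\nu$ on $\{0,1\}^E$, $\pi\cup\nu$ is the law of the union of independent samples of $\pi$ and $\nu$ (a measure on $\Sigma\subset\Omega$ being viewed as a measure on $\Omega$). *)

From mathcomp Require Import all_boot all_order all_algebra.
Set Implicit Arguments. Unset Strict Implicit. Unset Printing Implicit Defensive.
Import Order.TTheory GRing.Theory Num.Theory.
Local Open Scope ring_scope.

(* Configurations omega in {0,1}^E are identified with subsets of E. *)
Section Defs.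
Variables (R : realFieldType) (E : finType).

Definition bern (r : E -> R) (w : {set E}) : R :=
  (\prod_(e in w) r e) * \prod_(e in ~: w) (1 - r e).

Definition condM (mu : {set E} -> R) (A : {set {set E}}) (w : {set E}) : R :=
  if w \in A then mu w / (\sum_(v in A) mu v) else 0.

Definition Sdown (S : {set {set E}}) (w : {set E}) : {set {set E}} :=
  [set eta in S | eta \subset w].

(* union of independent samples *)
Definition unionM (mu nu : {set E} -> R) (w : {set E}) : R :=
  \sum_(a : {set E}) \sum_(b : {set E}) (mu a * nu b) *+ (a :|: b == w).

Definition diracM_ (eta : {set E}) (w : {set E}) : R := (w == eta)%:R.

Definition xpx (p x : E -> R) (e : E) : R := x e / (p e + x e).

Definition gammaM (p x : E -> R) (S : {set {set E}}) : {set E} -> R :=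
  condM (bern (xpx p x)) S.

Definition jweight (p x : E -> R) (S : {set {set E}}) (w eta : {set E}) : R :=
  bern p w * gammaM p x S eta * (eta \in Sdown S w)%:R.

(* the joint probability measure scrP on Omega x Sigma (viewed on Omega x Omega,
   vanishing off Sigma in the second coordinate) *)
Definition jointP (p x : E -> R) (S : {set {set E}}) (w eta : {set E}) : R :=
  jweight p x S w eta /
    (\sum_(w' : {set E}) \sum_(eta' : {set E}) jweight p x S w' eta').

Definition margO (p x : E -> R) (S : {set {set E}}) (w : {set E}) : R :=
  \sum_(eta : {set E}) jointP p x S w eta.

Definition margS (p x : E -> R) (S : {set {set E}}) (eta : {set E}) : R :=
  \sum_(w : {set E}) jointP p x S w eta.

End Defs.
Arguments diracM_ {R E}.

From mathcomp Require Import all_boot all_order all_algebra ring.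
Set Implicit Arguments. Unset Strict Implicit. Unset Printing Implicit Defensive.
Import Order.TTheory GRing.Theory Num.Theory.
Local Open Scope ring_scope.

(* Since P_{x/(p+x)}[eta] is proportional to prod_{e in eta} x_e / p_e and
   1[eta ⊂ omega] P_p[omega] / prod_{e in eta} p_e = P_p[omega | eta ⊂ omega],
   the joint weight factorises as
     scrP[omega, eta] = P_Sigma[eta] * P_p[omega | eta ⊂ omega]
   with P_Sigma[eta] proportional to 1[eta in Sigma] prod_{e in eta} x_e.
   Summing over omega gives the marginal in (a), and P_p[. | eta ⊂ omega] is
   P_p ∪ delta_eta, which gives (b).  For fixed omega the weight is proportional
   to P_{x/(p+x)}[eta] 1[eta in Sigma^down(omega)], the conditional law in (a). *)

Section Bernoulli.
Variables (R : realFieldType) (E : finType).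
Implicit Types (r : E -> R) (a b w : {set E}).

Lemma prod_natr_forall (P : pred E) : \prod_e ((P e)%:R : R) = [forall e, P e]%:R.
Proof.
case: forallP => [PE | notPE]; first by rewrite big1 // => e _; rewrite PE.
have [e /negbTE Pe] : exists e, ~~ P e.
  by apply/existsP; rewrite -negb_forall; apply/forallP.
by rewrite (bigD1 e) //= Pe mul0r.
Qed.

Lemma natr_subset a w : ((a \subset w)%:R : R) = \prod_e ((e \in a) ==> (e \in w))%:R.
Proof.
rewrite prod_natr_forall; congr (nat_of_bool _)%:R.
by apply/subsetP/forallP => [aw e | aw e]; [apply/implyP/aw | apply/implyP].
Qed.

Lemma natr_setU_eq a b w :
  ((a :|: b == w)%:R : R) = \prod_e (((e \in a) || (e \in b)) == (e \in w))%:R.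
Proof.
rewrite prod_natr_forall; congr (nat_of_bool _)%:R.
apply/eqP/forallP => [<- e | abw]; first by rewrite in_setU.
by apply/setP => e; rewrite in_setU; apply/eqP.
Qed.

Lemma sum_set_prod (g : E -> bool -> R) :
  \sum_(b : {set E}) \prod_e g e (e \in b) = \prod_e (g e true + g e false).
Proof.
rewrite (@bigA_distr R 0 1 *%R +%R E (fun e => g e true) (fun e => g e false)).
by apply: eq_bigr => b _; apply: eq_bigr => e _; case: (e \in b).
Qed.

Lemma bernE r w : bern r w = \prod_e (if e \in w then r e else 1 - r e).
Proof.
rewrite /bern (bigID (mem w) predT) /=; congr (_ * _).
  by apply: eq_bigr => e ->.
by apply: eq_big => e; rewrite ?in_setC // => /negbTE ->.
Qed.

Lemma bern_gt0 r w : (forall e, 0 < r e < 1) -> 0 < bern r w.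
Proof.
move=> r01; apply: mulr_gt0; apply: prodr_gt0 => e _; case/andP: (r01 e) => //.
by rewrite subr_gt0.
Qed.

Lemma sum_bern_supset r a :
  \sum_(w : {set E} | a \subset w) bern r w = \prod_(e in a) r e.
Proof.
rewrite big_mkcond /=.
under eq_bigr do rewrite -mulrb -mulr_natr bernE natr_subset -big_split /=.
rewrite (sum_set_prod (fun e t => (if t then r e else 1 - r e) * ((e \in a) ==> t)%:R)).
rewrite [RHS]big_mkcond /=; apply: eq_bigr => e _.
by case: (e \in a); rewrite /= ?mulr1 ?mulr0 ?addr0 ?subrKC.
Qed.

Lemma bern_setU r a w :
  \prod_(e in a) r e * \sum_(b : {set E} | a :|: b == w) bern r b
  = bern r w * (a \subset w)%:R.
Proof.
rewrite [X in _ * X]big_mkcond /=.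
under [X in _ * X]eq_bigr do rewrite -mulrb -mulr_natr bernE natr_setU_eq -big_split /=.
rewrite (sum_set_prod
  (fun e t => (if t then r e else 1 - r e) * (((e \in a) || t) == (e \in w))%:R)).
rewrite big_mkcond bernE natr_subset -!big_split /=.
apply: eq_bigr => e _.
by case: (e \in a); case: (e \in w);
  rewrite /= ?(mulr1, mulr0, mul1r, mul0r, add0r, addr0, subrKC).
Qed.

Lemma condM_bern_supset r a w :
  condM (bern r) [set v : {set E} | a \subset v] w
  = bern r w * (a \subset w)%:R / \prod_(e in a) r e.
Proof.
rewrite /condM (eq_bigl (fun v : {set E} => a \subset v)) => [|v]; last by rewrite inE.
by rewrite sum_bern_supset inE; case: (a \subset w); rewrite ?mulr1 ?mulr0 ?mul0r.
Qed.

Lemma xpx_gt0_lt1 (p x : E -> R) e : 0 < p e -> 0 < x e -> 0 < xpx p x e < 1.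
Proof.
move=> pe_gt0 xe_gt0; have pxe_gt0 : 0 < p e + x e by rewrite addr_gt0.
by rewrite /xpx divr_gt0 //= ltr_pdivrMr // mul1r ltrDr.
Qed.

Lemma bern_xpx (p x : E -> R) a : (forall e, p e + x e != 0) ->
  bern (xpx p x) a * \prod_(e in a) p e = bern (xpx p x) set0 * \prod_(e in a) x e.
Proof.
move=> px_neq0; rewrite !bernE [\prod_(e in a) p e]big_mkcond.
rewrite [\prod_(e in a) x e]big_mkcond -!big_split /=.
by apply: eq_bigr => e _; rewrite in_set0 /xpx; case: (e \in a); field; apply: px_neq0.
Qed.

End Bernoulli.

Section Measures.
Variables (R : realFieldType) (E : finType).
Implicit Types (r : E -> R) (mu nu f : {set E} -> R).
Implicit Types (A : {set {set E}}) (a w : {set E}).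

Lemma sum_condM mu A : \sum_(v in A) mu v != 0 -> \sum_v condM mu A v = 1.
Proof. by move=> muA_neq0; rewrite /condM -big_mkcond /= -mulr_suml divff. Qed.

Lemma condM_normalize f mu A (k : R) :
  (forall v, f v = k * (mu v * (v \in A)%:R)) -> \sum_v f v != 0 ->
  forall v, f v / \sum_v f v = condM mu A v.
Proof.
move=> fE f_neq0 v.
have sumfE : \sum_v f v = k * \sum_(v in A) mu v.
  rewrite [X in _ * X]big_mkcond mulr_sumr; apply: eq_bigr => u _.
  by rewrite fE; case: (u \in A); rewrite ?mulr1 ?mulr0.
have k_neq0 : k != 0 by apply: contraNneq f_neq0 => k0; rewrite sumfE k0 mul0r.
rewrite sumfE fE /condM; case: (v \in A); last by rewrite !mulr0 mul0r.
by rewrite mulr1 invfM mulrACA divff ?mul1r.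
Qed.

Lemma unionM_diracr mu a w :
  unionM mu (diracM_ a) w = \sum_(b : {set E} | a :|: b == w) mu b.
Proof.
rewrite /unionM [RHS]big_mkcond; apply: eq_bigr => b _.
rewrite (bigD1 a) //= big1 => [|c /negbTE]; rewrite /diracM_ ?eqxx.
  by rewrite mulr1 addr0 setUC mulrb.
by move=> ->; rewrite mulr0 mul0rn.
Qed.

Lemma unionM_mixture mu nu w :
  unionM mu nu w = \sum_a mu a * unionM nu (diracM_ a) w.
Proof.
rewrite {1}/unionM; apply: eq_bigr => a _.
rewrite unionM_diracr mulr_sumr [RHS]big_mkcond.
by apply: eq_bigr => b _; rewrite mulrb.
Qed.

Lemma unionM_bern_dirac r a w : \prod_(e in a) r e != 0 ->
  unionM (bern r) (diracM_ a) w = condM (bern r) [set v : {set E} | a \subset v] w.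
Proof.
move=> ra_neq0; rewrite unionM_diracr condM_bern_supset -bern_setU.
by rewrite mulrAC divff ?mul1r.
Qed.

Lemma sumr_gt0_nonempty A f :
  A != set0 -> (forall v, 0 < f v) -> 0 < \sum_(v in A) f v.
Proof.
case/set0Pn => v0 v0A f_gt0; rewrite (bigD1 v0) //=; apply: (lt_le_trans (f_gt0 v0)).
by rewrite lerDl; apply: sumr_ge0 => v _; apply: ltW.
Qed.

End Measures.

Section Coupling.
Variables (R : realFieldType) (E : finType) (p x : E -> R) (S : {set {set E}}).
Hypotheses (p01 : forall e, 0 < p e < 1) (x_gt0 : forall e, 0 < x e).
Hypothesis S_neq0 : S != set0.
Implicit Types (a w eta : {set E}).

Local Notation wx := (fun a : {set E} => \prod_(e in a) x e).
Local Notation supsets a := [set v : {set E} | a \subset v].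

Lemma prod_p_neq0 a : \prod_(e in a) p e != 0.
Proof. by rewrite gt_eqF //; apply: prodr_gt0 => e _; case/andP: (p01 e). Qed.

Lemma bern_xpx_gt0 a : 0 < bern (xpx p x) a.
Proof. by apply: bern_gt0 => e; apply: xpx_gt0_lt1; case/andP: (p01 e). Qed.

Lemma sum_condM_supsets a : \sum_w condM (bern p) (supsets a) w = 1.
Proof.
apply: sum_condM.
rewrite (eq_bigl (fun w : {set E} => a \subset w)) => [|w]; last by rewrite inE.
by rewrite sum_bern_supset prod_p_neq0.
Qed.

Lemma sum_wx_gt0 : 0 < \sum_(v in S) wx v.
Proof. by apply: sumr_gt0_nonempty => // v; apply: prodr_gt0. Qed.

Lemma sum_bern_xpx_gt0 : 0 < \sum_(v in S) bern (xpx p x) v.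
Proof. by apply: sumr_gt0_nonempty => // v; apply: bern_xpx_gt0. Qed.

Let mass := bern (xpx p x) set0 * (\sum_(v in S) wx v) / (\sum_(v in S) bern (xpx p x) v).

Lemma mass_gt0 : 0 < mass.
Proof.
by apply: divr_gt0; [apply: mulr_gt0|]; rewrite ?bern_xpx_gt0 ?sum_wx_gt0 ?sum_bern_xpx_gt0.
Qed.

Lemma jweightE w eta :
  jweight p x S w eta = mass * (condM wx S eta * condM (bern p) (supsets eta) w).
Proof.
have xpxE : bern (xpx p x) eta = bern (xpx p x) set0 * wx eta / \prod_(e in eta) p e.
  rewrite -bern_xpx ?mulfK ?prod_p_neq0 // => e.
  by case/andP: (p01 e) => pe_gt0 _; rewrite gt_eqF // addr_gt0.
rewrite condM_bern_supset /jweight /gammaM /condM /Sdown /mass !inE.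
case: (eta \in S); last by rewrite !(mul0r, mulr0).
rewrite xpxE /=; field.
by rewrite prod_p_neq0 !gt_eqF ?sum_wx_gt0 ?sum_bern_xpx_gt0.
Qed.

Lemma jointPE w eta :
  jointP p x S w eta = condM wx S eta * condM (bern p) (supsets eta) w.
Proof.
have sum_jweight : \sum_w' \sum_eta' jweight p x S w' eta' = mass.
  rewrite exchange_big /=; under eq_bigr => eta' _ do
    rewrite (eq_bigr _ (fun w' _ => jweightE w' eta')) -mulr_sumr -mulr_sumr sum_condM_supsets.
  rewrite -mulr_sumr; under eq_bigr do rewrite mulr1.
  by rewrite sum_condM ?mulr1 // gt_eqF // sum_wx_gt0.
by rewrite /jointP sum_jweight jweightE mulrAC divff ?mul1r // gt_eqF // mass_gt0.
Qed.

Lemma margSE eta : margS p x S eta = condM wx S eta.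
Proof.
rewrite /margS; under eq_bigr do rewrite jointPE.
by rewrite -mulr_sumr sum_condM_supsets mulr1.
Qed.

Lemma jointP_condO w : margO p x S w != 0 ->
  forall eta, jointP p x S w eta / margO p x S w = condM (bern (xpx p x)) (Sdown S w) eta.
Proof.
apply: (condM_normalize (k := bern p w / (\sum_(v in S) bern (xpx p x) v) /
                               (\sum_w' \sum_eta' jweight p x S w' eta'))).
move=> eta; rewrite /jointP /jweight /gammaM /condM.
have [etaD | _] := boolP (eta \in Sdown S w); last by rewrite !mulr0 mul0r.
by move: (etaD); rewrite inE => /andP[-> _]; ring.
Qed.

Lemma margO_unionM w : margO p x S w = unionM (margS p x S) (bern p) w.
Proof.
rewrite unionM_mixture; apply: eq_bigr => eta _.
by rewrite jointPE margSE unionM_bern_dirac ?prod_p_neq0.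
Qed.

Lemma jointP_condS eta : margS p x S eta != 0 -> forall w,
  jointP p x S w eta / margS p x S eta = condM (bern p) (supsets eta) w.
Proof. by move=> margS_neq0 w; rewrite jointPE -margSE mulrAC divff ?mul1r. Qed.

End Coupling.

Theorem proposition3p1 (R : realFieldType) (E : finType)
  (p x : E -> R) (S : {set {set E}})
  (hp : forall e, 0 < p e < 1) (hx : forall e, 0 < x e)
  (hS : S != set0) :
  (* (a) marginal on Sigma is proportional to prod x_e *)
  (forall eta, margS p x S eta = condM (fun a => \prod_(e in a) x e) S eta) /\
  (* (a) conditional law given omega *)
  (forall w, margO p x S w != 0 ->
     forall eta, jointP p x S w eta / margO p x S w
                 = condM (bern (xpx p x)) (Sdown S w) eta) /\
  (* (b) marginal on Omega is P_Sigma U P_p *)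
  (forall w, margO p x S w = unionM (margS p x S) (bern p) w) /\
  (* (b) conditional law given eta *)
  (forall eta, eta \in S -> margS p x S eta != 0 ->
     forall w, jointP p x S w eta / margS p x S eta
               = unionM (bern p) (@diracM_ R E eta) w /\
               jointP p x S w eta / margS p x S eta
               = condM (bern p) [set a : {set E} | eta \subset a] w).
Proof.
split; first exact: margSE.
split; first exact: jointP_condO.
split; first exact: margO_unionM.
move=> eta _ margS_neq0 w.
by rewrite jointP_condS // unionM_bern_dirac // prod_p_neq0.
Qed.
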